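(* Let $\ell_1,\dots,\ell_T$ be labels, $v_1,v_2>0$, and indices $i\le k<j$ such that the optimal solutions of the adjacent subproblems $(i,k)$ and $(k+1,j)$ both exist and are constant (hence with values $r_{i,k}$ and $r_{k+1,j}$ respectively). If $r_{i,k}\ge r_{k+1,j}$, then the optimal solution of the pooled subproblem $(i,j)$ exists, is constant, and has value $r_{i,j}$.
   Context: A regular binary proper scoring rule (RBPSR) is a function $C_\rho:\{\theta_1,\theta_2\}\times[0,1]\to[0,\infty]$ given by $C_\rho(\theta_1,q)=\int_q^1\frac{\rho(\eta)}{\eta}\,d\eta$ and $C_\rho(\theta_2,q)=\int_0^q\frac{\rho(\eta)}{1-\eta}\,d\eta$, where $\rho$ is a probability distribution on $[0,1]$ (possibly containing Dirac point masses), and these integrals are finite except that $C_\rho(\theta_1,0)$ and $C_\rho(\theta_2,1)$ may equal $\infty$. Given labels $\ell_1,\dots,\ell_T\in\{\theta_1,\theta_2\}$ and weights $v_1,v_2>0$, write $w(\theta_1)=v_1$, $w(\theta_2)=v_2$. For $1\le i\le j\le T$, a solution of subproblem $(i,j)$ is any $p_{i,j}=(p_i,\dots,p_j)\in[0,1]^{j-i+1}$, feasible if $p_i\le\cdots\le p_j$, with objective $J_{i,j}(p_{i,j})=\sum_{t=i}^j w(\ell_t)C_\rho(\ell_t,p_t)$. The optimal solution of subproblem $(i,j)$ is a feasible solution minimizing $J_{i,j}$ among feasible solutions simultaneously for every RBPSR $C_\rho$; it is constant if $p_i=\cdots=p_j$. For $i\le j$, $r_{i,j}=\frac{v_1m_{i,j}}{v_1m_{i,j}+v_2n_{i,j}}$,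 where $m_{i,j},n_{i,j}$ are the numbers of $\theta_1$- and $\theta_2$-labels among $\ell_i,\dots,\ell_j$. *)

From Stdlib Require Import Reals Lra Classical ClassicalEpsilon.
Open Scope R_scope.

Inductive ereal : Type := Fin (r : R) | PInf.

Definition ele (x y : ereal) : Prop :=
  match x, y with
  | _, PInf => True
  | PInf, Fin _ => False
  | Fin a, Fin b => a <= b
  end.

Definition eadd (x y : ereal) : ereal :=
  match x, y with
  | Fin a, Fin b => Fin (a + b)
  | _, _ => PInf
  end.

(** scaling by a real weight (used only with weights > 0) *)
Definition escale (v : R) (x : ereal) : ereal :=
  match x with Fin a => Fin (v * a) | PInf => PInf end.

Definition esup (S : R -> Prop) : ereal :=
  match excluded_middle_informative (exists m, is_lub S m) with
  | left H => Fin (proj1_sig (constructive_indefinite_description _ H))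
  | right _ => PInf
  end.

(** A probability distribution rho on [0,1], possibly with Dirac masses,
    represented by its cumulative distribution function
    F x = rho([0,x]) (rho((-oo,x])). *)
Definition is_cdf01 (F : R -> R) : Prop :=
  (forall x y, x <= y -> F x <= F y) /\
  (forall x, x < 0 -> F x = 0) /\
  (forall x, 1 <= x -> F x = 1) /\
  (forall x eps, 0 < eps -> exists d, 0 < d /\ forall y, x <= y < x + d -> F y - F x < eps).

(** Lower sum of a nonnegative step function below g on the partition
    x 0 <= x 1 <= ... <= x n, with value c k on the piece (x (k-1), x k]:
    sum_{k=1}^n c k * rho((x (k-1), x k]). *)
Fixpoint lsum (F : R -> R) (x c : nat -> R) (n : nat) : R :=
  match n with
  | O => 0
  | S m => lsum F x c m + c (S m) * (F (x (S m)) - F (x m))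
  end.

Definition is_lower_sum (F : R -> R) (g : R -> ereal) (a b s : R) : Prop :=
  exists (n : nat) (x c : nat -> R),
    x O = a /\ x n = b /\
    (forall k, (k < n)%nat -> x k <= x (S k)) /\
    (forall k, (1 <= k <= n)%nat ->
       0 <= c k /\ forall eta, x (pred k) < eta <= x k -> ele (Fin (c k)) (g eta)) /\
    s = lsum F x c n.

(** Lebesgue--Stieltjes integral of the nonnegative (extended-valued) g over
    the interval (a,b] with respect to the distribution with CDF F, defined as
    the supremum of the integrals of nonnegative step functions below g. *)
Definition LSint (F : R -> R) (g : R -> ereal) (a b : R) : ereal :=
  esup (is_lower_sum F g a b).

(** integrands 1/eta and 1/(1-eta), with value +oo at the singular point *)
Definition g1 (eta : R) : ereal := if Rlt_dec 0 eta then Fin (/ eta) else PInf.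
Definition g2 (eta : R) : ereal := if Rlt_dec eta 1 then Fin (/ (1 - eta)) else PInf.

Inductive label : Type := theta1 | theta2.

(** The RBPSR C_rho, rho given by its CDF F:
    C(theta1,q) = int_{(q,1]} rho(eta)/eta,
    C(theta2,q) = int_{[0,q]} rho(eta)/(1-eta)   ([0,q] = (-1,q] for rho on [0,1]). *)
Definition Crho (F : R -> R) (l : label) (q : R) : ereal :=
  match l with
  | theta1 => LSint F g1 q 1
  | theta2 => LSint F g2 (-1) q
  end.

Definition weight (v1 v2 : R) (l : label) : R :=
  match l with theta1 => v1 | theta2 => v2 end.

(** J_{i,j}(p) = sum_{t=i}^{j} w(l_t) C(l_t, p_t), computed as a sum of
    cnt terms starting at index i. *)
Fixpoint Jsum (F : R -> R) (v1 v2 : R) (ell : nat -> label) (p : nat -> R)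
  (i cnt : nat) : ereal :=
  match cnt with
  | O => Fin 0
  | S c => eadd (escale (weight v1 v2 (ell i)) (Crho F (ell i) (p i)))
                (Jsum F v1 v2 ell p (S i) c)
  end.

Definition J (F : R -> R) (v1 v2 : R) (ell : nat -> label) (i j : nat)
  (p : nat -> R) : ereal :=
  Jsum F v1 v2 ell p i (S j - i).

(** a solution p_{i,j} is the restriction of p : nat -> R to indices i..j *)
Definition feasible (i j : nat) (p : nat -> R) : Prop :=
  (forall t, (i <= t <= j)%nat -> 0 <= p t <= 1) /\
  (forall t, (i <= t)%nat -> (t < j)%nat -> p t <= p (S t)).

Definition optimal (ell : nat -> label) (v1 v2 : R) (i j : nat) (p : nat -> R) : Prop :=
  feasible i j p /\
  forall F, is_cdf01 F ->
    forall p', feasible i j p' -> ele (J F v1 v2 ell i j p) (J F v1 v2 ell i j p').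

Definition constant_sol (i j : nat) (p : nat -> R) : Prop :=
  forall t, (i <= t <= j)%nat -> p t = p i.

Definition is_lab (l l' : label) : nat :=
  match l, l' with
  | theta1, theta1 => 1%nat
  | theta2, theta2 => 1%nat
  | _, _ => 0%nat
  end.

Fixpoint count_lab (l : label) (ell : nat -> label) (i cnt : nat) : nat :=
  match cnt with
  | O => O
  | S c => (is_lab l (ell i) + count_lab l ell (S i) c)%nat
  end.

Definition mcount (ell : nat -> label) (i j : nat) : nat := count_lab theta1 ell i (S j - i).
Definition ncount (ell : nat -> label) (i j : nat) : nat := count_lab theta2 ell i (S j - i).

Definition rval (ell : nat -> label) (v1 v2 : R) (i j : nat) : R :=
  v1 * INR (mcount ell i j) / (v1 * INR (mcount ell i j) + v2 * INR (ncount ell i j)).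

(** For a block of labels [s, s+c) and a level r we use the
    weighted excess
        excess r s c = v1 m (1 - r) - v2 n r,
    (m, n the numbers of theta1/theta2 labels), which is additive in the block
    and vanishes for the whole block exactly at r = r_{i,j}.  The proof has
    two halves, valid for every scoring rule at once:
    - Sufficiency: if r in [0,1] balances the block (total excess 0) and every
      suffix of the block has excess <= 0, the constant solution r is optimal.
      Moving a constant block from x to y changes the score by an integral of
      rho(eta) (v2 n / (1-eta) - v1 m / eta) over (x,y], whose sign is that of
      the excess at eta; an induction then compares with monotone solutions.
    - Necessity: if a constant optimal solution exists, testing optimality
      against point masses rho = delta_e shows that its value is at most
      r_{i,j} and that every suffix has excess <= 0 at every e > r_{i,j},
      hence (by continuity in e) at r_{i,j}.
    For adjacent blocks with r_{i,k} >= r_{k+1,j} the pooled value r_{i,j}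
    lies between them, and the suffix conditions of both blocks combine into
    those of the pooled block, so sufficiency applies. *)

From Stdlib Require Import Reals Lra Lia ClassicalEpsilon
  FunctionalExtensionality PropExtensionality.
Open Scope R_scope.

Lemma ele_refl x : ele x x.
Proof. destruct x; simpl; lra || auto. Qed.

Lemma ele_trans x y z : ele x y -> ele y z -> ele x z.
Proof. destruct x, y, z; simpl; intros; auto; try lra; contradiction. Qed.

Lemma ele_antisym x y : ele x y -> ele y x -> x = y.
Proof. destruct x, y; simpl; intros; auto; try contradiction. f_equal; lra. Qed.

Lemma eadd_comm x y : eadd x y = eadd y x.
Proof. destruct x, y; simpl; auto. f_equal; lra. Qed.

Lemma eadd_assoc x y z : eadd x (eadd y z) = eadd (eadd x y) z.
Proof. destruct x, y, z; simpl; auto. f_equal; lra. Qed.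

Lemma eadd_0_l x : eadd (Fin 0) x = x.
Proof. destruct x; simpl; auto. f_equal; lra. Qed.

Lemma eadd_interchange a b c d :
  eadd (eadd a b) (eadd c d) = eadd (eadd a c) (eadd b d).
Proof. destruct a, b, c, d; simpl; auto. f_equal; lra. Qed.

Lemma eadd_mono x x' y y' : ele x x' -> ele y y' -> ele (eadd x y) (eadd x' y').
Proof. destruct x, x', y, y'; simpl; intros; auto; try lra; contradiction. Qed.

Lemma escale_eadd v x y : escale v (eadd x y) = eadd (escale v x) (escale v y).
Proof. destruct x, y; simpl; auto. f_equal; lra. Qed.

Lemma escale_escale a b x : escale a (escale b x) = escale (a * b) x.
Proof. destruct x; simpl; auto. f_equal; lra. Qed.

Lemma escale_nonneg v x : 0 <= v -> ele (Fin 0) x -> ele (Fin 0) (escale v x).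
Proof. destruct x; simpl; intros; auto. nra. Qed.

(** [emult n x] is the n-fold sum x + ... + x; unlike [escale (INR n)] it
    gives 0 for n = 0 even when x = +oo. *)
Fixpoint emult (n : nat) (x : ereal) : ereal :=
  match n with O => Fin 0 | S m => eadd x (emult m x) end.

Lemma emult_S n x : emult (S n) x = escale (INR (S n)) x.
Proof.
  induction n as [|n IH].
  - destruct x; simpl; auto. f_equal; lra.
  - change (emult (S (S n)) x) with (eadd x (emult (S n) x)). rewrite IH.
    destruct x as [a|]; [|reflexivity]. cbn [escale eadd]. f_equal. rewrite (S_INR (S n)). ring.
Qed.

Lemma emult_fin n u : emult n (Fin u) = Fin (INR n * u).
Proof.
  induction n as [|n IH]; simpl emult.
  - f_equal; simpl; ring.
  - rewrite IH, S_INR. cbn [eadd]. f_equal; ring.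
Qed.

Lemma emult_eadd n x y : emult n (eadd x y) = eadd (emult n x) (emult n y).
Proof.
  induction n as [|n IH]; simpl emult.
  - simpl. f_equal; lra.
  - rewrite IH. apply eadd_interchange.
Qed.

Lemma emult_nonneg n x : ele (Fin 0) x -> ele (Fin 0) (emult n x).
Proof.
  intros Hx; induction n as [|n IH]; simpl emult; [simpl; lra|].
  replace (Fin 0) with (eadd (Fin 0) (Fin 0)) by (simpl; f_equal; lra).
  apply eadd_mono; auto.
Qed.

Lemma esup_ge (S : R -> Prop) s : S s -> ele (Fin s) (esup S).
Proof.
  intros Hs. unfold esup. destruct (excluded_middle_informative _) as [H|H]; simpl; auto.
  destruct (constructive_indefinite_description _ H) as [m Hm]; simpl.
  apply (proj1 Hm), Hs.
Qed.

Lemma esup_le (S : R -> Prop) s0 B :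
  S s0 -> (forall s, S s -> s <= B) -> ele (esup S) (Fin B).
Proof.
  intros H0 HB. unfold esup. destruct (excluded_middle_informative _) as [H|H]; simpl.
  - destruct (constructive_indefinite_description _ H) as [m Hm]; simpl.
    apply (proj2 Hm); exact HB.
  - apply H. destruct (completeness S) as [m Hm]; [exists B; exact HB | exists s0; auto |].
    exists m; auto.
Qed.

Lemma esup_ext (S S' : R -> Prop) : (forall s, S s <-> S' s) -> esup S = esup S'.
Proof.
  intros H. replace S' with S; auto.
  apply functional_extensionality; intros s; apply propositional_extensionality; auto.
Qed.

(** Lower sums built piece by piece, left to right: [chain_sum F g a b s]
    says that s is the lower sum of a step function below g on (a, b].  This
    is an inductive form of [is_lower_sum], convenient for induction. *)
Inductive chain_sum (F : R -> R) (g : R -> ereal) (a : R) : R -> R -> Prop :=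
| chain_nil : chain_sum F g a a 0
| chain_cons b b' s c0 : chain_sum F g a b s -> b <= b' -> 0 <= c0 ->
    (forall x, b < x <= b' -> ele (Fin c0) (g x)) ->
    chain_sum F g a b' (s + c0 * (F b' - F b)).

Definition nonneg_fun (g : R -> ereal) : Prop := forall x, ele (Fin 0) (g x).

Lemma lsum_ext F x c x' c' n :
  (forall k, (k <= n)%nat -> x k = x' k /\ c k = c' k) -> lsum F x c n = lsum F x' c' n.
Proof.
  induction n as [|n IH]; intros H; simpl; auto.
  rewrite IH by (intros; apply H; lia).
  destruct (H (S n)) as [-> ->]; auto. destruct (H n) as [-> _]; auto.
Qed.

Lemma lower_sum_chain F g a b s : is_lower_sum F g a b s -> chain_sum F g a b s.
Proof.
  intros [n [x [c [H0 [Hn [Hm [Hp Hs]]]]]]]. subst b s.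
  induction n as [|n IH]; simpl.
  - rewrite H0. apply chain_nil.
  - destruct (Hp (S n)) as [Hc Hg]; [lia|].
    apply chain_cons; [| apply Hm; lia | exact Hc | exact Hg].
    apply IH; [intros k Hk; apply Hm | intros k Hk; apply Hp]; lia.
Qed.

Lemma chain_lower_sum F g a b s : chain_sum F g a b s -> is_lower_sum F g a b s.
Proof.
  induction 1 as [|b b' s c0 H IH Hbb Hc0 Hg].
  - exists O, (fun _ => a), (fun _ => 0).
    split; [auto|]. split; [auto|]. split; [intros; lia|]. split; [intros; lia|]. auto.
  - destruct IH as [n [x [c [H0 [Hn [Hm [Hp Hs]]]]]]].
    exists (S n), (fun k => if Nat.eqb k (S n) then b' else x k),
      (fun k => if Nat.eqb k (S n) then c0 else c k).
    split; [simpl; auto|]. split; [rewrite Nat.eqb_refl; auto|].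
    split.
    { intros k Hk. destruct (Nat.eqb_spec k (S n)); [lia|].
      destruct (Nat.eqb_spec (S k) (S n)); [|apply Hm; lia].
      replace k with n by lia. rewrite Hn. auto. }
    split.
    { intros k Hk. destruct (Nat.eqb_spec k (S n)) as [->|].
      - simpl Init.Nat.pred. destruct (Nat.eqb_spec n (S n)); [lia|].
        rewrite Hn. split; auto.
      - destruct (Nat.eqb_spec (Init.Nat.pred k) (S n)); [lia|]. apply Hp; lia. }
    simpl lsum. rewrite Nat.eqb_refl. destruct (Nat.eqb_spec n (S n)); [lia|].
    rewrite <- Hn, Hs. f_equal.
    apply lsum_ext. intros k Hk. destruct (Nat.eqb_spec k (S n)); [lia|]. auto.
Qed.

Lemma LSint_chain F g a b : LSint F g a b = esup (chain_sum F g a b).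
Proof.
  apply esup_ext. split; [apply lower_sum_chain | apply chain_lower_sum].
Qed.

Lemma chain_le F g a b s : chain_sum F g a b s -> a <= b.
Proof. induction 1; lra. Qed.

Lemma chain_zero F g a b : nonneg_fun g -> a <= b -> chain_sum F g a b 0.
Proof.
  intros Hg Hab. replace 0 with (0 + 0 * (F b - F a)) by ring.
  apply chain_cons; [apply chain_nil | lra | lra | intros; apply Hg].
Qed.

Lemma chain_concat F g a b c s1 s2 :
  chain_sum F g a b s1 -> chain_sum F g b c s2 -> chain_sum F g a c (s1 + s2).
Proof.
  intros H1 H2. induction H2.
  - rewrite Rplus_0_r; auto.
  - rewrite <- Rplus_assoc. apply chain_cons; auto.
Qed.

Lemma chain_split F g a c s b : chain_sum F g a c s -> a <= b -> b <= c ->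
  exists s1 s2, chain_sum F g a b s1 /\ chain_sum F g b c s2 /\ s = s1 + s2.
Proof.
  induction 1 as [|b0 b' s c0 H IH Hbb Hc0 Hg]; intros Hab Hbc.
  - replace b with a by lra. exists 0, 0. repeat split; [apply chain_nil | apply chain_nil | ring].
  - destruct (Rle_lt_dec b b0).
    + destruct (IH Hab r) as [s1 [s2 [H1 [H2 E]]]].
      exists s1, (s2 + c0 * (F b' - F b0)). repeat split; auto.
      * apply chain_cons; auto.
      * rewrite E; ring.
    + exists (s + c0 * (F b - F b0)), (0 + c0 * (F b' - F b)). repeat split.
      * apply chain_cons; auto; try lra. intros x Hx; apply Hg; lra.
      * apply chain_cons; [apply chain_nil | lra | lra | intros x Hx; apply Hg; lra].
      * ring.
Qed.

Lemma chain_scale F g h a b s al be : 0 < al -> 0 < be ->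
  chain_sum F g a b s ->
  (forall x, a < x <= b -> ele (escale al (g x)) (escale be (h x))) ->
  chain_sum F h a b (al / be * s).
Proof.
  intros Hal Hbe. induction 1 as [|b0 b' s c0 H IH Hbb Hc0 Hg]; intros Hc.
  - rewrite Rmult_0_r. apply chain_nil.
  - pose proof (chain_le _ _ _ _ _ H).
    replace (al / be * (s + c0 * (F b' - F b0))) with
      (al / be * s + (al / be * c0) * (F b' - F b0)) by ring.
    apply chain_cons; auto.
    + apply IH. intros x Hx; apply Hc; lra.
    + assert (0 < al / be) by (apply Rdiv_lt_0_compat; auto). nra.
    + intros x Hx. specialize (Hg x Hx). specialize (Hc x ltac:(lra)).
      destruct (g x) as [gx|], (h x) as [hx|]; simpl in *; auto; try contradiction.
      unfold Rdiv. apply Rmult_le_reg_l with be; auto.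
      replace (be * (al * / be * c0)) with (al * c0) by (field; lra). nra.
Qed.

Lemma LSint_ge F g a b s : chain_sum F g a b s -> ele (Fin s) (LSint F g a b).
Proof. rewrite LSint_chain. apply esup_ge. Qed.

Lemma LSint_le F g a b B : nonneg_fun g -> a <= b ->
  (forall s, chain_sum F g a b s -> s <= B) -> ele (LSint F g a b) (Fin B).
Proof.
  intros Hg Hab H. rewrite LSint_chain. apply esup_le with 0; auto. apply chain_zero; auto.
Qed.

Lemma LSint_nonneg F g a b : nonneg_fun g -> a <= b -> ele (Fin 0) (LSint F g a b).
Proof. intros. apply LSint_ge, chain_zero; auto. Qed.

Lemma LSint_add F g a b c : nonneg_fun g -> a <= b -> b <= c ->
  LSint F g a c = eadd (LSint F g a b) (LSint F g b c).
Proof.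
  intros Hg Hab Hbc. apply ele_antisym.
  - destruct (LSint F g a b) as [L1|] eqn:E1; [|destruct (LSint F g a c); simpl; auto].
    destruct (LSint F g b c) as [L2|] eqn:E2; [|destruct (LSint F g a c); simpl; auto].
    apply LSint_le; auto; [lra|]. intros s Hs.
    destruct (chain_split _ _ _ _ _ _ Hs Hab Hbc) as [s1 [s2 [H1 [H2 ->]]]].
    pose proof (LSint_ge _ _ _ _ _ H1) as G1. pose proof (LSint_ge _ _ _ _ _ H2) as G2.
    rewrite E1 in G1; rewrite E2 in G2. simpl in *. lra.
  - destruct (LSint F g a c) as [L|] eqn:E; [|destruct (eadd _ _); simpl; auto].
    assert (HU : forall s1 s2, chain_sum F g a b s1 -> chain_sum F g b c s2 -> s1 + s2 <= L).
    { intros s1 s2 H1 H2.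
      pose proof (LSint_ge _ _ _ _ _ (chain_concat _ _ _ _ _ _ _ H1 H2)) as G.
      rewrite E in G. exact G. }
    assert (A1 : forall s2, chain_sum F g b c s2 -> ele (LSint F g a b) (Fin (L - s2))).
    { intros s2 H2. apply LSint_le; auto. intros s1 H1. specialize (HU _ _ H1 H2). lra. }
    destruct (LSint F g a b) as [L1|] eqn:E1;
      [|destruct (A1 0 (chain_zero F g b c Hg Hbc))].
    assert (A2 : ele (LSint F g b c) (Fin (L - L1))).
    { apply LSint_le; auto. intros s2 H2. specialize (A1 _ H2). simpl in A1. lra. }
    destruct (LSint F g b c) as [L2|]; [|contradiction].
    simpl in *. lra.
Qed.

Lemma LSint_compare F g h a b al be : nonneg_fun g -> 0 < al -> 0 < be -> a <= b ->
  (forall x, a < x <= b -> ele (escale al (g x)) (escale be (h x))) ->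
  ele (escale al (LSint F g a b)) (escale be (LSint F h a b)).
Proof.
  intros Hg Hal Hbe Hab Hc.
  destruct (LSint F h a b) as [H|] eqn:EH; [|destruct (LSint F g a b); simpl; auto].
  assert (HG : ele (LSint F g a b) (Fin (be / al * H))).
  { apply LSint_le; auto. intros s Hs.
    pose proof (LSint_ge _ _ _ _ _ (chain_scale F g h a b s al be Hal Hbe Hs Hc)) as G.
    rewrite EH in G. simpl in G.
    apply Rmult_le_reg_l with (al / be); [apply Rdiv_lt_0_compat; auto|].
    replace (al / be * (be / al * H)) with H by (field; lra). exact G. }
  destruct (LSint F g a b) as [G|]; [|contradiction]. simpl in *.
  apply Rmult_le_reg_l with (/ al); [apply Rinv_0_lt_compat; auto|].
  replace (/ al * (al * G)) with G by (field; lra).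
  replace (/ al * (be * H)) with (be / al * H) by (field; lra). exact HG.
Qed.

Lemma emult_LSint_compare F g h a b (m n : nat) al be :
  nonneg_fun g -> nonneg_fun h -> 0 < al -> 0 < be -> a <= b ->
  ((m <> 0)%nat -> (n <> 0)%nat /\ forall x, a < x <= b ->
     ele (escale (INR m * al) (g x)) (escale (INR n * be) (h x))) ->
  ele (emult m (escale al (LSint F g a b))) (emult n (escale be (LSint F h a b))).
Proof.
  intros Hg Hh Hal Hbe Hab Hmn.
  destruct m as [|m].
  { apply emult_nonneg, escale_nonneg; [lra|]. apply LSint_nonneg; auto. }
  destruct (Hmn ltac:(lia)) as [Hn Hpt].
  destruct n as [|n]; [contradiction|].
  rewrite !emult_S, !escale_escale.
  apply LSint_compare; auto; apply Rmult_lt_0_compat; auto; apply lt_0_INR; lia.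
Qed.

Lemma count_split l ell s a b :
  count_lab l ell s (a + b) = (count_lab l ell s a + count_lab l ell (s + a) b)%nat.
Proof.
  revert s; induction a as [|a IH]; intros s; cbn [count_lab Nat.add].
  - rewrite Nat.add_0_r; auto.
  - rewrite IH. replace (S s + a)%nat with (s + S a)%nat by lia. lia.
Qed.

Lemma count_total ell s c :
  (count_lab theta1 ell s c + count_lab theta2 ell s c)%nat = c.
Proof.
  revert s; induction c as [|c IH]; intros s; cbn [count_lab]; auto.
  specialize (IH (S s)). destruct (ell s); simpl; lia.
Qed.

Definition wtotal (ell : nat -> label) (v1 v2 : R) (s c : nat) : R :=
  v1 * INR (count_lab theta1 ell s c) + v2 * INR (count_lab theta2 ell s c).

(** Weighted excess of theta1-labels in [s, s+c) over the level r; it is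
    <= 0 exactly when the weighted theta1-frequency of the block is <= r. *)
Definition excess (ell : nat -> label) (v1 v2 r : R) (s c : nat) : R :=
  v1 * INR (count_lab theta1 ell s c) * (1 - r) - v2 * INR (count_lab theta2 ell s c) * r.

Section Blocks.

Variables (ell : nat -> label) (v1 v2 : R).
Hypotheses (Hv1 : 0 < v1) (Hv2 : 0 < v2).

Lemma wtotal_nonneg s c : 0 <= wtotal ell v1 v2 s c.
Proof.
  unfold wtotal. pose proof (pos_INR (count_lab theta1 ell s c)).
  pose proof (pos_INR (count_lab theta2 ell s c)). nra.
Qed.

Lemma wtotal_pos s c : (0 < c)%nat -> 0 < wtotal ell v1 v2 s c.
Proof.
  intros Hc. unfold wtotal.
  assert (E : INR (count_lab theta1 ell s c) + INR (count_lab theta2 ell s c) = INR c)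
    by (rewrite <- plus_INR, count_total; auto).
  assert (1 <= INR c) by (apply (le_INR 1); lia).
  pose proof (pos_INR (count_lab theta1 ell s c)).
  pose proof (pos_INR (count_lab theta2 ell s c)).
  destruct (Rle_lt_dec (INR (count_lab theta1 ell s c)) 0); nra.
Qed.

Lemma excess_split r s a b :
  excess ell v1 v2 r s (a + b) = excess ell v1 v2 r s a + excess ell v1 v2 r (s + a) b.
Proof. unfold excess. rewrite !count_split, !plus_INR. ring. Qed.

Lemma excess_shift r r' s c :
  excess ell v1 v2 r' s c = excess ell v1 v2 r s c - (r' - r) * wtotal ell v1 v2 s c.
Proof. unfold excess, wtotal. ring. Qed.

Lemma excess_anti r r' s c : r <= r' -> excess ell v1 v2 r' s c <= excess ell v1 v2 r s c.
Proof.
  intros H. rewrite (excess_shift r r'). pose proof (wtotal_nonneg s c). nra.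
Qed.

Lemma rval_wtotal lo hi : (lo <= hi)%nat ->
  rval ell v1 v2 lo hi * wtotal ell v1 v2 lo (S hi - lo)
  = v1 * INR (count_lab theta1 ell lo (S hi - lo)).
Proof.
  intros Hlh. pose proof (wtotal_pos lo (S hi - lo) ltac:(lia)) as HW.
  unfold rval, mcount, ncount. unfold wtotal in *. field. lra.
Qed.

Lemma rval_excess lo hi : (lo <= hi)%nat ->
  excess ell v1 v2 (rval ell v1 v2 lo hi) lo (S hi - lo) = 0.
Proof.
  intros Hlh. pose proof (rval_wtotal lo hi Hlh) as E.
  unfold excess. unfold wtotal in E. lra.
Qed.

Lemma rval_range lo hi : (lo <= hi)%nat -> 0 <= rval ell v1 v2 lo hi <= 1.
Proof.
  intros Hlh. pose proof (rval_wtotal lo hi Hlh) as E.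
  pose proof (wtotal_pos lo (S hi - lo) ltac:(lia)) as HW.
  pose proof (pos_INR (count_lab theta1 ell lo (S hi - lo))).
  pose proof (pos_INR (count_lab theta2 ell lo (S hi - lo))).
  unfold wtotal in *. split; nra.
Qed.

Lemma Jsum_split F q s a b :
  Jsum F v1 v2 ell q s (a + b) = eadd (Jsum F v1 v2 ell q s a) (Jsum F v1 v2 ell q (s + a) b).
Proof.
  revert s; induction a as [|a IH]; intros s; cbn [Jsum Nat.add].
  - rewrite Nat.add_0_r. symmetry. apply eadd_0_l.
  - rewrite IH, eadd_assoc. do 2 f_equal. lia.
Qed.

Lemma Jsum_last F q s c :
  Jsum F v1 v2 ell q s (S c) = eadd (Jsum F v1 v2 ell q s c)
    (escale (weight v1 v2 (ell (s + c)%nat)) (Crho F (ell (s + c)%nat) (q (s + c)%nat))).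
Proof.
  replace (S c) with (c + 1)%nat by lia. rewrite Jsum_split. cbn [Jsum].
  rewrite (eadd_comm _ (Fin 0)), eadd_0_l. auto.
Qed.

Lemma Jsum_ext F q q' s c : (forall t, (s <= t < s + c)%nat -> q t = q' t) ->
  Jsum F v1 v2 ell q s c = Jsum F v1 v2 ell q' s c.
Proof.
  revert s; induction c as [|c IH]; intros s H; cbn [Jsum]; auto.
  rewrite H by lia. rewrite IH; auto. intros; apply H; lia.
Qed.

Lemma Jsum_const F x s c :
  Jsum F v1 v2 ell (fun _ => x) s c =
  eadd (emult (count_lab theta1 ell s c) (escale v1 (Crho F theta1 x)))
       (emult (count_lab theta2 ell s c) (escale v2 (Crho F theta2 x))).
Proof.
  revert s; induction c as [|c IH]; intros s; cbn [Jsum count_lab].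
  - simpl. f_equal; lra.
  - rewrite IH. destruct (ell s); cbn [weight is_lab Nat.add emult].
    + apply eadd_assoc.
    + rewrite !eadd_assoc. f_equal. apply eadd_comm.
Qed.

End Blocks.
(** ** Sufficiency: balanced constant solutions are optimal *)

Lemma nonneg_g1 : nonneg_fun g1.
Proof.
  intros x. unfold g1. destruct (Rlt_dec 0 x); simpl; auto.
  left; apply Rinv_0_lt_compat; auto.
Qed.

Lemma nonneg_g2 : nonneg_fun g2.
Proof.
  intros x. unfold g2. destruct (Rlt_dec x 1); simpl; auto.
  left; apply Rinv_0_lt_compat; lra.
Qed.

Lemma cross_mult_le x y a b : 0 < a -> 0 < b -> (x * / a <= y * / b <-> x * b <= y * a).
Proof.
  intros Ha Hb.
  replace (x * b) with ((x * / a) * (a * b)) by (field; lra).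
  replace (y * a) with ((y * / b) * (a * b)) by (field; lra).
  split; intros H.
  - apply Rmult_le_compat_r; [nra | exact H].
  - apply Rmult_le_reg_r with (a * b); [nra | exact H].
Qed.

Lemma g1_le_g2 A B eta : 0 < eta -> A * (1 - eta) <= B * eta ->
  ele (escale A (g1 eta)) (escale B (g2 eta)).
Proof.
  intros Heta H. unfold g1, g2.
  destruct (Rlt_dec 0 eta); [|lra]. destruct (Rlt_dec eta 1); simpl; auto.
  apply cross_mult_le; lra.
Qed.

Lemma g2_le_g1 A B eta : 0 < eta < 1 -> B * eta <= A * (1 - eta) ->
  ele (escale B (g2 eta)) (escale A (g1 eta)).
Proof.
  intros Heta H. unfold g1, g2.
  destruct (Rlt_dec 0 eta); [|lra]. destruct (Rlt_dec eta 1); [|lra]. simpl.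
  apply cross_mult_le; lra.
Qed.

Lemma monotone_le (p : nat -> R) s e :
  (forall t, (s <= t)%nat -> (S t < e)%nat -> p t <= p (S t)) ->
  forall t t', (s <= t)%nat -> (t <= t')%nat -> (t' < e)%nat -> p t <= p t'.
Proof.
  intros H t t'. induction t' as [|t' IH]; intros H1 H2 H3.
  - replace t with 0%nat by lia. lra.
  - destruct (Nat.eq_dec t (S t')) as [->|]; [lra|].
    apply Rle_trans with (p t'); [apply IH | apply H]; lia.
Qed.

Lemma monotone_threshold (p : nat -> R) r s : forall c,
  (forall t, (s <= t)%nat -> (S t < s + c)%nat -> p t <= p (S t)) ->
  exists a, (a <= c)%nat /\ (forall t, (s <= t < s + a)%nat -> p t < r) /\
            (forall t, (s + a <= t < s + c)%nat -> r <= p t).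
Proof.
  induction c as [|c IH]; intros Hm.
  - exists 0%nat. split; [lia|]. split; intros; lia.
  - destruct IH as [a [Ha [H1 H2]]]; [intros; apply Hm; lia|].
    destruct (Nat.eq_dec a c) as [->|Hac].
    + destruct (Rlt_dec (p (s + c)%nat) r).
      * exists (S c). split; [lia|]. split; [|intros; lia].
        intros t Ht. destruct (Nat.eq_dec t (s + c)) as [->|]; auto. apply H1; lia.
      * exists c. split; [lia|]. split; auto.
        intros t Ht. destruct (Nat.eq_dec t (s + c)) as [->|]; [lra|]. apply H2; lia.
    + exists a. split; [lia|]. split; auto.
      intros t Ht. destruct (Nat.eq_dec t (s + c)) as [->|]; [|apply H2; lia].
      apply Rle_trans with (p (s + c - 1)%nat); [apply H2; lia|].
      replace (s + c)%nat with (S (s + c - 1)) at 2 by lia. apply Hm; lia.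
Qed.

Section Sufficiency.

Variables (ell : nat -> label) (v1 v2 : R).
Hypotheses (Hv1 : 0 < v1) (Hv2 : 0 < v2).

Section FixedRule.

Variable F : R -> R.

(** Moving a constant block from x up to y trades the theta1-part of the
    scores on (x, y] for the theta2-part: both sides share a common term B. *)
Lemma Jsum_const_shift x y s c : 0 <= x -> x <= y -> y <= 1 ->
  exists B,
    Jsum F v1 v2 ell (fun _ => x) s c =
      eadd B (emult (count_lab theta1 ell s c) (escale v1 (LSint F g1 x y))) /\
    Jsum F v1 v2 ell (fun _ => y) s c =
      eadd B (emult (count_lab theta2 ell s c) (escale v2 (LSint F g2 x y))).
Proof.
  intros Hx Hxy Hy. rewrite !Jsum_const. cbn [Crho].
  rewrite (LSint_add F g1 x y 1), (LSint_add F g2 (-1) x y)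
    by (apply nonneg_g1 || apply nonneg_g2 || lra).
  rewrite !escale_eadd, !emult_eadd.
  eexists. split.
  - rewrite <- eadd_assoc. apply eadd_comm.
  - apply eadd_assoc.
Qed.

Lemma Jsum_const_up r x y s c : 0 <= r -> r <= x -> x <= y -> y <= 1 ->
  excess ell v1 v2 r s c <= 0 ->
  ele (Jsum F v1 v2 ell (fun _ => x) s c) (Jsum F v1 v2 ell (fun _ => y) s c).
Proof.
  intros Hr Hrx Hxy Hy Hexc.
  destruct (Rle_lt_or_eq_dec x y Hxy) as [Hlt|<-]; [|apply ele_refl].
  destruct (Jsum_const_shift x y s c) as [B [-> ->]]; try lra.
  apply eadd_mono; [apply ele_refl|].
  apply emult_LSint_compare; auto using nonneg_g1, nonneg_g2; try lra.
  intros Hm. split.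
  - intros Hn. unfold excess in Hexc. rewrite Hn in Hexc. simpl INR in Hexc.
    assert (0 < v1 * INR (count_lab theta1 ell s c) * (1 - r)); [|lra].
    apply Rmult_lt_0_compat; [apply Rmult_lt_0_compat; auto; apply lt_0_INR|]; lia || lra.
  - intros eta Heta. apply g1_le_g2; [lra|].
    pose proof (excess_anti ell v1 v2 Hv1 Hv2 r eta s c ltac:(lra)) as H.
    unfold excess in H, Hexc. lra.
Qed.

Lemma Jsum_const_down r x y s c : 0 <= y -> y <= x -> x <= r -> r <= 1 ->
  0 <= excess ell v1 v2 r s c ->
  ele (Jsum F v1 v2 ell (fun _ => x) s c) (Jsum F v1 v2 ell (fun _ => y) s c).
Proof.
  intros Hy Hyx Hxr Hr Hexc.
  destruct (Rle_lt_or_eq_dec y x Hyx) as [Hlt|Heq]; [|subst y; apply ele_refl].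
  destruct (Jsum_const_shift y x s c) as [B [-> ->]]; try lra.
  apply eadd_mono; [apply ele_refl|].
  apply emult_LSint_compare; auto using nonneg_g1, nonneg_g2; try lra.
  intros Hn. unfold excess in Hexc.
  assert (Hn' : 0 < INR (count_lab theta2 ell s c)) by (apply lt_0_INR; lia).
  assert (Hnr : 0 < v2 * INR (count_lab theta2 ell s c) * r)
    by (apply Rmult_lt_0_compat; [apply Rmult_lt_0_compat|]; lra).
  assert (Hm : count_lab theta1 ell s c <> 0%nat).
  { intros Hm. rewrite Hm in Hexc. simpl INR in Hexc. lra. }
  assert (Hr1 : r < 1).
  { destruct (Rle_lt_or_eq_dec r 1 Hr) as [|Hr1]; auto. subst r. lra. }
  split; auto.
  intros eta Heta. apply g2_le_g1; [lra|].
  pose proof (excess_anti ell v1 v2 Hv1 Hv2 eta r s c ltac:(lra)) as H.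
  unfold excess in H. lra.
Qed.

(** Starting from a constant x >= r, a monotone solution above x is reached by
    raising the block to p s and recursing on the remaining suffix. *)
Lemma Jsum_up_monotone r p : 0 <= r -> forall c s x,
  (forall a, (a <= c)%nat -> excess ell v1 v2 r (s + a) (c - a) <= 0) ->
  r <= x -> (forall t, (s <= t < s + c)%nat -> x <= p t <= 1) ->
  (forall t, (s <= t)%nat -> (S t < s + c)%nat -> p t <= p (S t)) ->
  ele (Jsum F v1 v2 ell (fun _ => x) s c) (Jsum F v1 v2 ell p s c).
Proof.
  intros Hr c. induction c as [|c IH]; intros s x Hsuf Hrx Hp Hm; [apply ele_refl|].
  destruct (Hp s) as [Hxs Hs1]; [lia|].
  apply ele_trans with (Jsum F v1 v2 ell (fun _ => p s) s (S c)).
  - apply Jsum_const_up with r; auto.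
    specialize (Hsuf 0%nat ltac:(lia)). rewrite Nat.add_0_r, Nat.sub_0_r in Hsuf. exact Hsuf.
  - cbn [Jsum]. apply eadd_mono; [apply ele_refl|].
    apply IH; try lra.
    + intros a Ha. replace (S s + a)%nat with (s + S a)%nat by lia. apply (Hsuf (S a)); lia.
    + intros t Ht. split; [|apply Hp; lia]. apply (monotone_le p s (s + S c) Hm); lia.
    + intros t H1 H2. apply Hm; lia.
Qed.

(** Dually, from a constant x <= r a monotone solution below x is reached by
    lowering the block to its last value and recursing on the prefix. *)
Lemma Jsum_down_monotone r p s : r <= 1 -> forall c x,
  (forall a, (a <= c)%nat -> 0 <= excess ell v1 v2 r s a) ->
  x <= r -> (forall t, (s <= t < s + c)%nat -> 0 <= p t <= x) ->
  (forall t, (s <= t)%nat -> (S t < s + c)%nat -> p t <= p (S t)) ->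
  ele (Jsum F v1 v2 ell (fun _ => x) s c) (Jsum F v1 v2 ell p s c).
Proof.
  intros Hr c. induction c as [|c IH]; intros x Hpre Hxr Hp Hm; [apply ele_refl|].
  destruct (Hp (s + c)%nat) as [Hy0 Hyx]; [lia|].
  apply ele_trans with (Jsum F v1 v2 ell (fun _ => p (s + c)%nat) s (S c)).
  - apply Jsum_const_down with r; auto.
  - rewrite !Jsum_last. apply eadd_mono; [|apply ele_refl].
    apply IH; try lra.
    + intros a Ha; apply Hpre; lia.
    + intros t Ht. split; [apply Hp; lia|]. apply (monotone_le p s (s + S c) Hm); lia.
    + intros; apply Hm; lia.
Qed.

(** Core comparison: a level r in [0,1] balancing the block, with every
    suffix of frequency at most r, beats every monotone solution; split the
    solution where it crosses r and apply the two inductions. *)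
Lemma Jsum_balanced_le r p s c : 0 <= r <= 1 ->
  excess ell v1 v2 r s c = 0 ->
  (forall a, (a <= c)%nat -> excess ell v1 v2 r (s + a) (c - a) <= 0) ->
  (forall t, (s <= t < s + c)%nat -> 0 <= p t <= 1) ->
  (forall t, (s <= t)%nat -> (S t < s + c)%nat -> p t <= p (S t)) ->
  ele (Jsum F v1 v2 ell (fun _ => r) s c) (Jsum F v1 v2 ell p s c).
Proof.
  intros Hr Hbal Hsuf Hp Hm.
  destruct (monotone_threshold p r s c Hm) as [a [Ha [Hbelow Habove]]].
  replace c with (a + (c - a))%nat by lia. rewrite !Jsum_split.
  apply eadd_mono.
  - apply Jsum_down_monotone with r; try lra.
    + intros a' Ha'. specialize (Hsuf a' ltac:(lia)).
      pose proof (excess_split ell v1 v2 r s a' (c - a')) as E.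
      replace (a' + (c - a'))%nat with c in E by lia. lra.
    + intros t Ht. split; [apply Hp; lia|]. left; apply Hbelow; lia.
    + intros; apply Hm; lia.
  - apply Jsum_up_monotone with r; try lra.
    + intros a' Ha'. rewrite <- Nat.add_assoc.
      replace (c - a - a')%nat with (c - (a + a'))%nat by lia. apply Hsuf; lia.
    + intros t Ht. split; [apply Habove | apply Hp]; lia.
    + intros; apply Hm; lia.
Qed.

End FixedRule.

Lemma balanced_constant_optimal lo hi r : 0 <= r <= 1 ->
  excess ell v1 v2 r lo (S hi - lo) = 0 ->
  (forall a, (a <= S hi - lo)%nat -> excess ell v1 v2 r (lo + a) (S hi - lo - a) <= 0) ->
  optimal ell v1 v2 lo hi (fun _ => r).
Proof.
  intros Hr Hbal Hsuf. split; [split; intros; lra|].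
  intros F _ p [Hp1 Hp2]. apply Jsum_balanced_le; auto.
  - intros t Ht. apply Hp1. lia.
  - intros t H1 H2. apply Hp2; lia.
Qed.

End Sufficiency.
(** ** Point masses *)

Lemma affine_nonpos_right A B x b : x < b ->
  (forall e, x < e < b -> A + B * e <= 0) -> A + B * x <= 0.
Proof.
  intros Hxb H. destruct (Rle_lt_dec (A + B * x) 0) as [|Hpos]; auto. exfalso.
  destruct (Rle_lt_dec 0 B) as [HB|HB].
  - specialize (H ((x + b) / 2) ltac:(lra)). nra.
  - set (d := Rmin ((b - x) / 2) ((A + B * x) / (- 2 * B))).
    assert (Hd0 : 0 < d) by (apply Rmin_glb_lt; [lra | apply Rdiv_lt_0_compat; lra]).
    assert (Hd1 : d <= (b - x) / 2) by apply Rmin_l.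
    assert (Hd2 : - 2 * B * d <= A + B * x).
    { replace (A + B * x) with (- 2 * B * ((A + B * x) / (- 2 * B))) by (field; lra).
      apply Rmult_le_compat_l; [lra | apply Rmin_r]. }
    specialize (H (x + d) ltac:(lra)). lra.
Qed.

Lemma affine_nonpos_left A B a x : a < x ->
  (forall e, a < e < x -> A + B * e <= 0) -> A + B * x <= 0.
Proof.
  intros Hax H. replace (A + B * x) with (A + - B * - x) by ring.
  apply affine_nonpos_right with (- a); [lra|].
  intros e He. replace (A + - B * e) with (A + B * - e) by ring. apply H; lra.
Qed.

Lemma inv_le_iff a L : 0 < a -> (/ a <= L <-> 1 <= L * a).
Proof.
  intros Ha. pose proof (cross_mult_le 1 L a 1 Ha Rlt_0_1) as H.
  rewrite Rinv_1, Rmult_1_l, !Rmult_1_r in H. exact H.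
Qed.

Definition Fd (e x : R) : R := if Rlt_dec x e then 0 else 1.

Lemma Fd_lt e x : x < e -> Fd e x = 0.
Proof. unfold Fd; destruct (Rlt_dec x e); auto; lra. Qed.

Lemma Fd_ge e x : e <= x -> Fd e x = 1.
Proof. unfold Fd; destruct (Rlt_dec x e); auto; lra. Qed.

Lemma Fd_cdf e : 0 < e < 1 -> is_cdf01 (Fd e).
Proof.
  intros He. split; [|split; [|split]].
  - intros x y Hxy. unfold Fd. destruct (Rlt_dec x e), (Rlt_dec y e); lra.
  - intros x Hx. apply Fd_lt; lra.
  - intros x Hx. apply Fd_ge; lra.
  - intros x eps Heps. destruct (Rlt_dec x e).
    + exists (e - x). split; [lra|]. intros y Hy. rewrite !Fd_lt by lra. lra.
    + exists 1. split; [lra|]. intros y Hy. rewrite !Fd_ge by lra. lra.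
Qed.

(** Against a point mass at e, only the piece of a step function
    containing e counts, and there it lies below g e. *)
Lemma LSint_dirac_le e g a b G : nonneg_fun g -> g e = Fin G -> a <= b ->
  ele (LSint (Fd e) g a b) (Fin (G * (Fd e b - Fd e a))).
Proof.
  intros Hg HG Hab. apply LSint_le; auto. intros s Hs.
  induction Hs as [|b0 b' s c0 H IH Hbb Hc0 Hgp]; [lra|].
  pose proof (chain_le _ _ _ _ _ H) as Hab0. specialize (IH ltac:(lra)).
  assert (c0 * (Fd e b' - Fd e b0) <= G * (Fd e b' - Fd e b0)); [|lra].
  unfold Fd. destruct (Rlt_dec b' e), (Rlt_dec b0 e); try lra.
  specialize (Hgp e ltac:(lra)). rewrite HG in Hgp. simpl in Hgp. lra.
Qed.

Lemma LSint_dirac_ge e e' g a b c0 : nonneg_fun g -> a <= e' -> e' < e -> e <= b ->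
  0 <= c0 -> (forall x, e' < x <= e -> ele (Fin c0) (g x)) ->
  ele (Fin c0) (LSint (Fd e) g a b).
Proof.
  intros Hg H1 H2 H3 Hc0 Hc.
  assert (L : chain_sum (Fd e) g a b (((0 + 0 * (Fd e e' - Fd e a))
                + c0 * (Fd e e - Fd e e')) + 0 * (Fd e b - Fd e e))).
  { apply chain_cons; [| lra | lra | intros; apply Hg].
    apply chain_cons; auto; [|lra].
    apply chain_cons; [apply chain_nil | lra | lra | intros; apply Hg]. }
  apply LSint_ge in L. rewrite (Fd_ge e e), (Fd_lt e e') in L by lra.
  replace (0 + 0 * (0 - Fd e a) + c0 * (1 - 0) + 0 * (Fd e b - 1)) with c0 in L by ring.
  exact L.
Qed.

Lemma Crho_theta1_dirac e q : 0 < e < 1 -> 0 <= q <= 1 ->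
  Crho (Fd e) theta1 q = Fin (if Rlt_dec q e then / e else 0).
Proof.
  intros He Hq. cbn [Crho].
  assert (Hg : g1 e = Fin (/ e)) by (unfold g1; destruct (Rlt_dec 0 e); [auto | lra]).
  pose proof (LSint_dirac_le e g1 q 1 (/ e) nonneg_g1 Hg ltac:(lra)) as Hub.
  rewrite (Fd_ge e 1) in Hub by lra.
  destruct (Rlt_dec q e) as [Hqe|Hqe]; apply ele_antisym.
  - rewrite Fd_lt in Hub by lra. replace (/ e * (1 - 0)) with (/ e) in Hub by ring. exact Hub.
  - apply LSint_dirac_ge with q; auto using nonneg_g1; try lra.
    + left; apply Rinv_0_lt_compat; lra.
    + intros x Hx. unfold g1. destruct (Rlt_dec 0 x); [|lra]. simpl.
      apply Rinv_le_contravar; lra.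
  - rewrite Fd_ge in Hub by lra. replace (/ e * (1 - 1)) with 0 in Hub by ring. exact Hub.
  - apply LSint_nonneg; auto using nonneg_g1; lra.
Qed.

Lemma Crho_theta2_dirac e q : 0 < e < 1 -> 0 <= q <= 1 ->
  Crho (Fd e) theta2 q = Fin (if Rle_dec e q then / (1 - e) else 0).
Proof.
  intros He Hq. cbn [Crho].
  assert (Hg : g2 e = Fin (/ (1 - e))) by (unfold g2; destruct (Rlt_dec e 1); [auto | lra]).
  pose proof (LSint_dirac_le e g2 (-1) q (/ (1 - e)) nonneg_g2 Hg ltac:(lra)) as Hub.
  rewrite (Fd_lt e (-1)) in Hub by lra.
  destruct (Rle_dec e q) as [Hqe|Hqe].
  - rewrite Fd_ge in Hub by lra. replace (/ (1 - e) * (1 - 0)) with (/ (1 - e)) in Hub by ring.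
    destruct (LSint (Fd e) g2 (-1) q) as [L|] eqn:EL; [|contradiction].
    apply ele_antisym; [exact Hub|]. simpl. apply inv_le_iff; [lra|].
    (* the lower bounds 1/(1-e') for e' < e approach 1/(1-e) *)
    enough (1 - L + L * e <= 0) by lra.
    apply affine_nonpos_left with 0; [lra|]. intros e' He'.
    assert (Hlow : ele (Fin (/ (1 - e'))) (LSint (Fd e) g2 (-1) q)).
    { apply LSint_dirac_ge with e'; auto using nonneg_g2; try lra.
      - left; apply Rinv_0_lt_compat; lra.
      - intros x Hx. unfold g2. destruct (Rlt_dec x 1); [|lra]. simpl.
        apply Rinv_le_contravar; lra. }
    rewrite EL in Hlow. simpl in Hlow. apply inv_le_iff in Hlow; lra.
  - rewrite Fd_lt in Hub by lra. replace (/ (1 - e) * (0 - 0)) with 0 in Hub by ring.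
    apply ele_antisym; [exact Hub|]. apply LSint_nonneg; auto using nonneg_g2; lra.
Qed.

Section PointMassObjective.

Variables (ell : nat -> label) (v1 v2 : R).

Lemma Jsum_dirac_below e x s c : 0 < e < 1 -> 0 <= x < e ->
  Jsum (Fd e) v1 v2 ell (fun _ => x) s c = Fin (v1 * INR (count_lab theta1 ell s c) * / e).
Proof.
  intros He Hx. rewrite Jsum_const, Crho_theta1_dirac, Crho_theta2_dirac by lra.
  destruct (Rlt_dec x e); [|lra]. destruct (Rle_dec e x); [lra|].
  cbn [escale]. rewrite !emult_fin. cbn [eadd]. f_equal. ring.
Qed.

Lemma Jsum_dirac_above e x s c : 0 < e < 1 -> e <= x <= 1 ->
  Jsum (Fd e) v1 v2 ell (fun _ => x) s c =
  Fin (v2 * INR (count_lab theta2 ell s c) * / (1 - e)).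
Proof.
  intros He Hx. rewrite Jsum_const, Crho_theta1_dirac, Crho_theta2_dirac by lra.
  destruct (Rlt_dec x e); [lra|]. destruct (Rle_dec e x); [|lra].
  cbn [escale]. rewrite !emult_fin. cbn [eadd]. f_equal. ring.
Qed.

End PointMassObjective.
(** ** Necessity: what a constant optimal solution reveals *)

Section Necessity.

Variables (ell : nat -> label) (v1 v2 : R).
Hypotheses (Hv1 : 0 < v1) (Hv2 : 0 < v2).

(** The value of a constant optimal solution is at most r_{lo,hi}:
    otherwise the zero solution wins against a point mass between them. *)
Lemma optimal_constant_le_rval lo hi p : (lo <= hi)%nat ->
  optimal ell v1 v2 lo hi p -> constant_sol lo hi p -> p lo <= rval ell v1 v2 lo hi.
Proof.
  intros Hlh [[Hrange _] Hopt] Hconst.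
  set (rho := rval ell v1 v2 lo hi). set (cnt := (S hi - lo)%nat).
  destruct (Rle_lt_dec (p lo) rho) as [|Hlt]; [assumption|exfalso].
  pose proof (rval_range ell v1 v2 Hv1 Hv2 lo hi Hlh) as Hrho. fold rho in Hrho.
  assert (Hc : 0 <= p lo <= 1) by (apply Hrange; lia).
  set (e := (rho + p lo) / 2).
  assert (He : 0 < e < 1) by (unfold e; lra).
  assert (Hzero : feasible lo hi (fun _ => 0)) by (split; intros; lra).
  pose proof (Hopt (Fd e) (Fd_cdf e He) (fun _ => 0) Hzero) as H.
  unfold J in H. fold cnt in H.
  rewrite (Jsum_ext ell v1 v2 (Fd e) p (fun _ => p lo)) in H
    by (intros t Ht; apply Hconst; unfold cnt in Ht; lia).
  rewrite Jsum_dirac_above, Jsum_dirac_below in H by (unfold e; lra). cbn [ele] in H.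
  rewrite cross_mult_le in H by lra.
  assert (Hexc : 0 <= excess ell v1 v2 e lo cnt) by (unfold excess; lra).
  pose proof (rval_excess ell v1 v2 Hv1 Hv2 lo hi Hlh) as E0. fold rho cnt in E0.
  rewrite (excess_shift ell v1 v2 rho e), E0 in Hexc.
  pose proof (wtotal_pos ell v1 v2 Hv1 Hv2 lo cnt ltac:(unfold cnt; lia)).
  assert (0 < (e - rho) * wtotal ell v1 v2 lo cnt) by (apply Rmult_lt_0_compat; unfold e; lra).
  lra.
Qed.

(** Testing against the solution that is 0 before lo+a and 1 from lo+a on,
    with a point mass at any e > r_{lo,hi}, shows that every suffix has
    excess <= 0 at level e. *)
Lemma optimal_constant_suffix_above lo hi p a e : (lo <= hi)%nat ->
  optimal ell v1 v2 lo hi p -> constant_sol lo hi p -> (a <= S hi - lo)%nat ->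
  rval ell v1 v2 lo hi < e < 1 ->
  excess ell v1 v2 e (lo + a) (S hi - lo - a) <= 0.
Proof.
  intros Hlh Hopt Hconst Ha He.
  pose proof (optimal_constant_le_rval lo hi p Hlh Hopt Hconst) as Hc.
  pose proof (rval_range ell v1 v2 Hv1 Hv2 lo hi Hlh) as Hrho.
  destruct Hopt as [[Hrange _] Hopt].
  assert (Hc0 : 0 <= p lo) by (apply Hrange; lia).
  set (cnt := (S hi - lo)%nat) in *.
  set (q := fun t => if Nat.ltb t (lo + a) then 0 else 1).
  assert (Hq : feasible lo hi q).
  { split; intros t; unfold q.
    - destruct (Nat.ltb t (lo + a)); lra.
    - intros H1 H2. destruct (Nat.ltb_spec t (lo + a)), (Nat.ltb_spec (S t) (lo + a));
        lra || lia. }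
  pose proof (Hopt (Fd e) (Fd_cdf e ltac:(lra)) q Hq) as H.
  unfold J in H. fold cnt in H.
  rewrite (Jsum_ext ell v1 v2 (Fd e) p (fun _ => p lo)) in H
    by (intros t Ht; apply Hconst; unfold cnt in Ht; lia).
  replace cnt with (a + (cnt - a))%nat in H at 2 by lia.
  rewrite Jsum_split in H.
  rewrite (Jsum_ext ell v1 v2 (Fd e) q (fun _ => 0) lo a),
    (Jsum_ext ell v1 v2 (Fd e) q (fun _ => 1) (lo + a) (cnt - a)) in H
    by (intros t Ht; unfold q; destruct (Nat.ltb_spec t (lo + a)); auto; lia).
  rewrite Jsum_dirac_below, Jsum_dirac_below, Jsum_dirac_above in H by lra. cbn [ele eadd] in H.
  replace cnt with (a + (cnt - a))%nat in H at 1 by lia.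
  rewrite count_split, plus_INR in H.
  assert (Hsuf : v1 * INR (count_lab theta1 ell (lo + a) (cnt - a)) * / e
                 <= v2 * INR (count_lab theta2 ell (lo + a) (cnt - a)) * / (1 - e)) by lra.
  rewrite cross_mult_le in Hsuf by lra. unfold excess. lra.
Qed.

(** Letting e decrease to r_{lo,hi}: every suffix of a block with a
    constant optimal solution has frequency at most r_{lo,hi}. *)
Lemma optimal_constant_suffix lo hi p a : (lo <= hi)%nat ->
  optimal ell v1 v2 lo hi p -> constant_sol lo hi p -> (a <= S hi - lo)%nat ->
  excess ell v1 v2 (rval ell v1 v2 lo hi) (lo + a) (S hi - lo - a) <= 0.
Proof.
  intros Hlh Hopt Hconst Ha.
  set (s := (lo + a)%nat). set (c := (S hi - lo - a)%nat).
  set (M := INR (count_lab theta1 ell s c)). set (N := INR (count_lab theta2 ell s c)).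
  assert (Eaff : forall r, excess ell v1 v2 r s c = v1 * M + - (v1 * M + v2 * N) * r)
    by (intros; unfold excess; fold M N; ring).
  destruct (rval_range ell v1 v2 Hv1 Hv2 lo hi Hlh) as [H0 H1].
  destruct (Rle_lt_or_eq_dec _ _ H1) as [Hlt|Heq].
  - rewrite Eaff. apply affine_nonpos_right with 1; [exact Hlt|].
    intros e He. rewrite <- Eaff. apply optimal_constant_suffix_above with p; auto.
  - rewrite Heq. unfold excess. fold M N.
    assert (0 <= N) by apply pos_INR. nra.
Qed.

End Necessity.

(** ** Pooling two adjacent blocks *)

Section Pooling.

Variables (ell : nat -> label) (v1 v2 : R) (i k j : nat).
Hypotheses (Hv1 : 0 < v1) (Hv2 : 0 < v2) (Hik : (i <= k)%nat) (Hkj : (k < j)%nat).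

Let rA := rval ell v1 v2 i k.
Let rB := rval ell v1 v2 (S k) j.
Let r := rval ell v1 v2 i j.

(** The pooled level is a weighted mean of the two block levels. *)
Lemma pooled_between : rB <= rA -> rB <= r <= rA.
Proof.
  intros HAB.
  pose proof (rval_excess ell v1 v2 Hv1 Hv2 i k Hik) as EA.
  pose proof (rval_excess ell v1 v2 Hv1 Hv2 (S k) j Hkj) as EB.
  pose proof (rval_excess ell v1 v2 Hv1 Hv2 i j ltac:(lia)) as E.
  replace (S j - i)%nat with ((S k - i) + (S j - S k))%nat in E by lia.
  rewrite excess_split in E. replace (i + (S k - i))%nat with (S k) in E by lia.
  rewrite (excess_shift ell v1 v2 rA r), (excess_shift ell v1 v2 rB r (S k)) in E.
  fold rA rB r in EA, EB, E. rewrite EA, EB in E.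
  pose proof (wtotal_pos ell v1 v2 Hv1 Hv2 i (S k - i) ltac:(lia)).
  pose proof (wtotal_pos ell v1 v2 Hv1 Hv2 (S k) (S j - S k) ltac:(lia)).
  split; nra.
Qed.

(** Suffix conditions of the two blocks combine into those of the union:
    a suffix starting in B is a suffix of B at a lower level, and a suffix
    starting in A is the complement of a prefix of A, whose frequency is at
    least r_A >= r. *)
Lemma pooled_suffixes :
  (forall a, (a <= S k - i)%nat -> excess ell v1 v2 rA (i + a) (S k - i - a) <= 0) ->
  (forall a, (a <= S j - S k)%nat -> excess ell v1 v2 rB (S k + a) (S j - S k - a) <= 0) ->
  rB <= r <= rA ->
  forall a, (a <= S j - i)%nat -> excess ell v1 v2 r (i + a) (S j - i - a) <= 0.
Proof.
  intros HsufA HsufB [HrB HrA] a Ha.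
  destruct (Nat.le_gt_cases (S k - i) a) as [HinB|HinA].
  - specialize (HsufB (a - (S k - i))%nat ltac:(lia)).
    replace (S k + (a - (S k - i)))%nat with (i + a)%nat in HsufB by lia.
    replace (S j - S k - (a - (S k - i)))%nat with (S j - i - a)%nat in HsufB by lia.
    pose proof (excess_anti ell v1 v2 Hv1 Hv2 rB r (i + a) (S j - i - a) HrB). lra.
  - specialize (HsufA a ltac:(lia)).
    pose proof (rval_excess ell v1 v2 Hv1 Hv2 i k Hik) as EA.
    pose proof (rval_excess ell v1 v2 Hv1 Hv2 i j ltac:(lia)) as E.
    fold rA in EA. fold r in E.
    replace (S k - i)%nat with (a + (S k - i - a))%nat in EA by lia.
    replace (S j - i)%nat with (a + (S j - i - a))%nat in E by lia.
    rewrite excess_split in EA, E.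
    pose proof (excess_anti ell v1 v2 Hv1 Hv2 r rA i a HrA). lra.
Qed.

End Pooling.

Theorem theorem4p10 (T : nat) (ell : nat -> label) (v1 v2 : R) (i k j : nat) :
  0 < v1 -> 0 < v2 ->
  (1 <= i)%nat -> (i <= k)%nat -> (k < j)%nat -> (j <= T)%nat ->
  (exists p, optimal ell v1 v2 i k p /\ constant_sol i k p) ->
  (exists p, optimal ell v1 v2 (S k) j p /\ constant_sol (S k) j p) ->
  rval ell v1 v2 i k >= rval ell v1 v2 (S k) j ->
  exists p, optimal ell v1 v2 i j p /\ constant_sol i j p /\ p i = rval ell v1 v2 i j.
Proof.
  intros Hv1 Hv2 _ Hik Hkj _ [pA [HA HcA]] [pB [HB HcB]] Hr.
  exists (fun _ => rval ell v1 v2 i j).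
  split; [|split; [intros t _; reflexivity | reflexivity]].
  apply balanced_constant_optimal; auto.
  - apply rval_range; auto; lia.
  - apply rval_excess; auto; lia.
  - apply pooled_suffixes with k; auto.
    + intros a Ha. apply optimal_constant_suffix with pA; auto.
    + intros a Ha. apply optimal_constant_suffix with pB; auto.
    + apply pooled_between; auto. lra.
Qed.
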